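(* Let $M$ be an algebraic group and let $\rho\colon M\to M$ be an invertible mapping (or birational correspondence) defined on a Zariski open subset of $M$ such that \[ \sigma(x):=(\rho(y))^{-1}\rho\bigl(\rho(x)(\rho(xy))^{-1}\bigr) \] is independent of $y$ on a Zariski open subset of $M\times M$. Then for any $a\in M$ the mapping $\tilde\rho(x)=\rho(x)a$ also has this property, and $\rho$ and $\tilde\rho$ define one and the same set-theoretical solution of the pentagon equation, i.e. the maps $s(x,y)=(xy,\ \rho(x)(\rho(xy))^{-1})$ and $\tilde s(x,y)=(xy,\ \tilde\rho(x)(\tilde\rho(xy))^{-1})$ coincide.
   Context: A set-theoretical solution of the pentagon equation on a set $M$ is an invertible map $s\colon M\times M\to M\times M$ with $s_{23}\circ s_{13}\circ s_{12}=s_{12}\circ s_{23}$ as maps of $M\times M\times M$, where $s_{ij}$ acts as $s$ on the $i$-th and $j$-th factors and trivially on the remaining one (in the algebraic setting, maps are defined and identities hold on Zariski open subsets). For $\rho$ with the property stated, the operations $x\cdot y=xy$, $x*y=\rho(x)(\rho(xy))^{-1}$ define the solution $s(x,y)=(x\cdot y,x*y)$. *)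

Set Implicit Arguments.

(** The algebraic/variety structure is only used through
    the notion of "(Zariski) open subset", which is abstracted below as an
    arbitrary predicate on subsets. *)
Record Group := {
  car :> Type;
  gmul : car -> car -> car;
  ginv : car -> car;
  gone : car;
  gmulA : forall x y z, gmul x (gmul y z) = gmul (gmul x y) z;
  gmul1l : forall x, gmul gone x = x;
  gmul1r : forall x, gmul x gone = x;
  gmulVl : forall x, gmul (ginv x) x = gone;
  gmulVr : forall x, gmul x (ginv x) = gone
}.

Arguments gmul {g} _ _.
Arguments ginv {g} _.
Arguments gone {g}.

Definition inj_on (G : Group) (D : G -> Prop) (rho : G -> G) : Prop :=
  forall x y, D x -> D y -> rho x = rho y -> x = y.

Definition sigma_indep (G : Group) (D : G -> Prop) (rho : G -> G)
    (Open2 : (G * G -> Prop) -> Prop) : Prop :=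
  exists U : G * G -> Prop, Open2 U /\
  exists sigma : G -> G, forall x y : G, U (x, y) ->
    D x /\ D y /\ D (gmul x y) /\
    D (gmul (rho x) (ginv (rho (gmul x y)))) /\
    sigma x = gmul (ginv (rho y))
                   (rho (gmul (rho x) (ginv (rho (gmul x y))))).

Definition pent_sol (G : Group) (rho : G -> G) (x y : G) : G * G :=
  (gmul x y, gmul (rho x) (ginv (rho (gmul x y)))).

Arguments inj_on G D rho : clear implicits.
Arguments sigma_indep G D rho Open2 : clear implicits.
Arguments pent_sol G rho x y : clear implicits.


(* Right translation by [a] cancels in every quotient [rho(x) rho(xy)^-1], so
   [rho] and [rho a] give the same operation [x * y] and hence the same map [s].
   In the expression defining [sigma] the translation survives only as the
   conjugation [sigma(x) |-> a^-1 sigma(x) a], which is still independent of [y]. *)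

Section GroupFacts.

Variable G : Group.

Lemma ginv_unique (x y : G) : gmul x y = gone -> ginv x = y.
Proof.
  intros Exy.
  rewrite <- (gmul1r _ (ginv x)), <- Exy, gmulA, gmulVl, gmul1l.
  reflexivity.
Qed.

Lemma ginvM (x y : G) : ginv (gmul x y) = gmul (ginv y) (ginv x).
Proof.
  apply ginv_unique.
  rewrite gmulA, <- (gmulA _ x y), gmulVr, gmul1r, gmulVr.
  reflexivity.
Qed.

Lemma gdiv_mul2r (p q a : G) :
  gmul (gmul p a) (ginv (gmul q a)) = gmul p (ginv q).
Proof.
  rewrite ginvM, gmulA, <- (gmulA _ p a), gmulVr, gmul1r.
  reflexivity.
Qed.

End GroupFacts.

Section RightTranslation.

Variables (G : Group) (rho : G -> G) (a : G).

Let rho_a (x : G) : G := gmul (rho x) a.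

Lemma pent_sol_mulr (x y : G) : pent_sol G rho_a x y = pent_sol G rho x y.
Proof.
  unfold pent_sol, rho_a.
  rewrite gdiv_mul2r.
  reflexivity.
Qed.

Lemma sigma_indep_mulr (D : G -> Prop) (Open2 : (G * G -> Prop) -> Prop) :
  sigma_indep G D rho Open2 -> sigma_indep G D rho_a Open2.
Proof.
  intros [U [OpenU [sigma Hsigma]]].
  exists U. split; [exact OpenU |].
  exists (fun x => gmul (gmul (ginv a) (sigma x)) a).
  intros x y Uxy.
  destruct (Hsigma x y Uxy) as [Dx [Dy [Dxy [Dxstary Esigma]]]].
  unfold rho_a. rewrite !gdiv_mul2r.
  repeat split; try assumption.
  rewrite Esigma, ginvM, !gmulA.
  reflexivity.
Qed.

End RightTranslation.

Theorem mainTheorem1 :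
  forall (G : Group) (Open1 : (G -> Prop) -> Prop)
    (Open2 : (G * G -> Prop) -> Prop)
    (D : G -> Prop) (rho : G -> G),
    Open1 D ->
    inj_on G D rho ->
    sigma_indep G D rho Open2 ->
    forall a : G,
      sigma_indep G D (fun x => gmul (rho x) a) Open2 /\
      (forall x y : G, D x -> D (gmul x y) ->
         pent_sol G rho x y = pent_sol G (fun z => gmul (rho z) a) x y).
Proof.
  intros G Open1 Open2 D rho _ _ Hsigma a.
  split.
  - exact (sigma_indep_mulr _ rho a _ _ Hsigma).
  - intros x y _ _.
    symmetry. apply pent_sol_mulr.
Qed.
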